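(* Let $p\geq 5$ be an integer and $s=\frac1p$. Let $n\geq 1$ be an integer. Then there is no integer strictly between $2\left(n-\frac12\right)^s$ and $2\left(n-\frac12+\frac{1}{2^{p+1}}\right)^s$. *)

From Stdlib Require Import Reals Lra Lia ZArith.

(** Put [y = m / 2].  Raising the assumed inequalities to the [p]-th power
    gives [n - 1/2 < y^p < n - 1/2 + 2^-(p+1)], and multiplying by [2^p]
    traps the integer [m^p] strictly between the integer [(2n - 1) 2^(p-1)]
    and that integer plus [1/2].  The argument only needs [p >= 1]. *)

From Stdlib Require Import Reals ZArith.
From Stdlib Require Import Lra Lia.
Open Scope R_scope.

Lemma Rpower_pos (x y : R) : 0 < Rpower x y.
Proof. apply exp_pos. Qed.

Lemma Rpower_root_pow (a : R) (p : nat) :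
  0 < a -> (0 < p)%nat -> Rpower (Rpower a (1 / INR p)) (INR p) = a.
Proof.
  intros Ha Hp.
  assert (Hp' : 0 < INR p) by (apply lt_0_INR; exact Hp).
  rewrite Rpower_mult.
  replace (1 / INR p * INR p) with 1 by (field; lra).
  apply Rpower_1; exact Ha.
Qed.

Lemma root_lt_pow (a y : R) (p : nat) :
  0 < a -> (0 < p)%nat -> Rpower a (1 / INR p) < y -> a < y ^ p.
Proof.
  intros Ha Hp Hy.
  assert (Hroot := Rpower_pos a (1 / INR p)).
  rewrite <- Rpower_pow by lra.
  rewrite <- (Rpower_root_pow a p Ha Hp) at 1.
  apply Rlt_Rpower_l; [apply lt_0_INR; exact Hp | lra].
Qed.

Lemma pow_lt_root (b y : R) (p : nat) :
  0 < b -> (0 < p)%nat -> 0 < y -> y < Rpower b (1 / INR p) -> y ^ p < b.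
Proof.
  intros Hb Hp Hy0 Hy.
  rewrite <- Rpower_pow by lra.
  rewrite <- (Rpower_root_pow b p Hb Hp).
  apply Rlt_Rpower_l; [apply lt_0_INR; exact Hp | lra].
Qed.

Lemma half_integer_pow_gap (p : nat) (k m : Z) : (0 < p)%nat ->
  ~ (IZR k / 2 < (IZR m / 2) ^ p < IZR k / 2 + 1 / 2 ^ (p + 1)).
Proof.
  intros Hp [Hlo Hhi].
  destruct p as [|q]; [lia|].
  assert (H2q : 0 < 2 ^ q) by (apply pow_lt; lra).
  assert (Hpow : (IZR m / 2) ^ S q * 2 ^ S q = IZR (m ^ Z.of_nat (S q))).
  { rewrite <- Rpow_mult_distr, <- pow_IZR. f_equal. field. }
  assert (Hbase : IZR k / 2 * 2 ^ S q = IZR (k * 2 ^ Z.of_nat q)).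
  { rewrite mult_IZR, <- pow_IZR. simpl. field. }
  assert (Htop : (IZR k / 2 + 1 / 2 ^ (S q + 1)) * 2 ^ S q
                 = IZR (k * 2 ^ Z.of_nat q) + 1 / 2).
  { rewrite <- Hbase, pow_add. simpl. field. lra. }
  apply (Rmult_lt_compat_r (2 ^ S q)) in Hlo, Hhi; [| apply pow_lt; lra ..].
  rewrite Hpow, Hbase in Hlo. rewrite Hpow, Htop in Hhi.
  apply lt_IZR in Hlo.
  assert (Hhi' : IZR (m ^ Z.of_nat (S q)) < IZR (k * 2 ^ Z.of_nat q + 1))
    by (rewrite plus_IZR; lra).
  apply lt_IZR in Hhi'. lia.
Qed.

Theorem lemma3p1 (p n : nat) (hp : (5 <= p)%nat) (hn : (1 <= n)%nat) :
  let s := 1 / INR p in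
  ~ exists m : Z,
      2 * Rpower (INR n - 1/2) s < IZR m /\
      IZR m < 2 * Rpower (INR n - 1/2 + 1 / 2 ^ (p + 1)) s.
Proof.
  intros s [m [Hlo Hhi]].
  assert (Hp : (0 < p)%nat) by lia.
  assert (Hn : 1 <= INR n) by (apply (le_INR 1); exact hn).
  assert (Hgap : 0 < 1 / 2 ^ (p + 1)) by (apply Rdiv_lt_0_compat; [lra | apply pow_lt; lra]).
  assert (Hk : IZR (2 * Z.of_nat n - 1) / 2 = INR n - 1/2).
  { rewrite minus_IZR, mult_IZR, <- INR_IZR_INZ. field. }
  apply (half_integer_pow_gap p (2 * Z.of_nat n - 1) m Hp).
  rewrite Hk. split.
  - apply root_lt_pow; [lra | exact Hp | unfold s in Hlo; lra].
  - apply pow_lt_root; [lra | exact Hp | | unfold s in Hhi; lra].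
    pose proof (Rpower_pos (INR n - 1/2) s). lra.
Qed.
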